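(* Let $\ln f(y\mid\theta)=-\tfrac12(y-\theta)^2$. Fix $M\ge1$, reals $y_\mu,a_\mu$ and $s_\mu>0$ ($\mu=1,\dots,M$), and let $\gamma_0=-1/\max_\mu s_\mu$. For $\gamma>\gamma_0$ let $$\theta^*_\mu(\gamma)=\mathop{\mathrm{argmax}}_{\theta}\Big\{\gamma\ln f(y_\mu\mid\theta)-\frac{(\theta-a_\mu)^2}{2s_\mu}\Big\},\qquad g_\mu(\gamma)=y_\mu-\theta^*_\mu(\gamma),$$ $$\mathcal T(\gamma)=\frac1M\sum_{\mu=1}^M\Big[\gamma\ln f(y_\mu\mid\theta^*_\mu(\gamma))-\frac{(\theta^*_\mu(\gamma)-a_\mu)^2}{2s_\mu}\Big].$$ Then (i) $\mathcal T'(\gamma)=\frac1M\sum_\mu\ln f(y_\mu\mid\theta^*_\mu(\gamma))$ and for every integer $k\ge2$ and $\gamma>\gamma_0$, $$\mathcal T^{(k)}(\gamma)=\frac{k!}{2M}(-1)^k\sum_{\mu=1}^M g_\mu(\gamma)^2\Big(\frac{s_\mu}{1+\gamma s_\mu}\Big)^{k-1}.$$ (ii) Assume $y_\mu\neq a_\mu$ for some $\mu$, and put $g_\mu=g_\mu(1)$, $r_\mu=s_\mu/(1+s_\mu)$. Then the limit $L=\lim_{n\to\infty}\frac{\sum_\mu g_\mu^2r_\mu^{\,n}}{\sum_\mu g_\mu^2 r_\mu^{\,n-1}}$ exists, and the power series $\sum_{k\ge0}\frac{1}{k!}\mathcal T^{(k)}(1)\,\eta^k$ (the Taylor expansion of $\mathcal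 T$ about $\gamma=1$ in the increment $\eta$) converges when $|\eta| L<1$ and diverges when $|\eta|L>1$. In particular, if $s_\mu=s$ for all $\mu$, it converges iff... more precisely converges for $|\eta|\,\frac{s}{1+s}<1$ and diverges for $|\eta|\,\frac{s}{1+s}>1$.
   Context: This is the GAMP (generalized approximate message passing) description for the Gaussian likelihood: $a_\mu$ plays the role of the cavity estimate $\widehat\theta^{\setminus\mu}_\mu$ of the model parameter, $s_\mu$ the rescaled variance ${s_\theta}_\mu$, and $g_\mu$ the rescaled quantity $(\check g_{\mathrm{out}})_\mu$; $\mathcal T''(1)$ is the GAMP expression of the functional variance. The series expansion of $\mathcal T$ is the one underlying the widely applicable information criterion (WAIC). When the predictor entries are i.i.d. with mean 0 and variance 1, all $s_\mu$ coincide with a common value $s$. *)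

From Stdlib Require Import Reals Arith Factorial.
From Coquelicot Require Import Coquelicot.
Open Scope R_scope.

Fixpoint rsum (n : nat) (f : nat -> R) : R :=
  match n with
  | O => 0
  | S m => rsum m f + f m
  end.

Fixpoint rmax (n : nat) (s : nat -> R) : R :=
  match n with
  | O => 0
  | S O => s O
  | S m => Rmax (rmax m s) (s m)
  end.

Definition lnf (y theta : R) : R := - / 2 * (y - theta) ^ 2.

Definition gamma0 (M : nat) (s : nat -> R) : R := - / rmax M s.

Definition objective (y a s gamma theta : R) : R :=
  gamma * lnf y theta - (theta - a) ^ 2 / (2 * s).

Definition is_argmax_family (M : nat) (y a s : nat -> R) (th : R -> nat -> R) : Prop :=
  forall gamma, gamma0 M s < gamma -> forall mu, (mu < M)%nat ->
    forall theta, objective (y mu) (a mu) (s mu) gamma theta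
                  <= objective (y mu) (a mu) (s mu) gamma (th gamma mu).

Definition gfun (y : nat -> R) (th : R -> nat -> R) (gamma : R) (mu : nat) : R :=
  y mu - th gamma mu.

Definition Tfun (M : nat) (y a s : nat -> R) (th : R -> nat -> R) (gamma : R) : R :=
  / INR M * rsum M (fun mu =>
     objective (y mu) (a mu) (s mu) gamma (th gamma mu)).

(* For gamma > gamma0 every denominator 1 + gamma s_mu is positive, so the objective is a
   strictly concave quadratic in theta with maximiser theta* = (gamma s y + a) / (1 + gamma s).
   Substituting gives T(gamma) = -(1/2M) sum_mu (y_mu - a_mu)^2 gamma / (1 + gamma s_mu),
   whose derivatives of every order are explicit.  At gamma = 1 the Taylor coefficients
   become -eta/(2M) sum_mu g_mu^2 (-eta r_mu)^j, a nonnegative combination of geometric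
   sequences: it is summable when |eta| times the largest ratio r_mu carried by a nonzero
   weight g_mu^2 is below 1, and its terms stay away from 0 when that product exceeds 1.
   The same largest ratio is the limit L of the quotients of successive moments. *)

From Stdlib Require Import Reals Factorial Lra Lia Psatz.
From Coquelicot Require Import Coquelicot.
Open Scope R_scope.

Lemma rsum_ext n f g :
  (forall mu, (mu < n)%nat -> f mu = g mu) -> rsum n f = rsum n g.
Proof.
  induction n as [|n IH]; intros H; simpl; [reflexivity|].
  rewrite IH by (intros; apply H; lia). rewrite H by lia. reflexivity.
Qed.

Lemma rsum_scal n k f : rsum n (fun mu => k * f mu) = k * rsum n f.
Proof. induction n as [|n IH]; simpl; [ring|]. rewrite IH; ring. Qed.

Lemma rsum_minus n f g : rsum n (fun mu => f mu - g mu) = rsum n f - rsum n g.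
Proof. induction n as [|n IH]; simpl; [ring|]. rewrite IH; ring. Qed.

Lemma rsum_nonneg n f :
  (forall mu, (mu < n)%nat -> 0 <= f mu) -> 0 <= rsum n f.
Proof.
  induction n as [|n IH]; intros H; simpl; [lra|].
  assert (0 <= f n) by (apply H; lia).
  assert (0 <= rsum n f) by (apply IH; intros; apply H; lia).
  lra.
Qed.

Lemma rsum_term_le n f m :
  (forall mu, (mu < n)%nat -> 0 <= f mu) -> (m < n)%nat -> f m <= rsum n f.
Proof.
  induction n as [|n IH]; intros H Hm; simpl; [lia|].
  assert (0 <= rsum n f) by (apply rsum_nonneg; intros; apply H; lia).
  assert (0 <= f n) by (apply H; lia).
  destruct (Nat.eq_dec m n) as [->|Hmn]; [lra|].
  assert (f m <= rsum n f) by (apply IH; [intros; apply H|]; lia).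
  lra.
Qed.

Lemma is_derive_rsum n (f : R -> nat -> R) f' x :
  (forall mu, (mu < n)%nat -> is_derive (fun t => f t mu) x (f' mu)) ->
  is_derive (fun t => rsum n (f t)) x (rsum n f').
Proof.
  induction n as [|n IH]; intros H; simpl.
  - apply (is_derive_const 0).
  - apply (is_derive_plus (fun t => rsum n (f t)) (fun t => f t n));
      [apply IH; intros|]; apply H; lia.
Qed.

Lemma is_lim_seq_rsum n (f : nat -> nat -> R) (l : nat -> R) :
  (forall mu, (mu < n)%nat -> is_lim_seq (fun j => f j mu) (l mu)) ->
  is_lim_seq (fun j => rsum n (f j)) (rsum n l).
Proof.
  induction n as [|n IH]; intros H; simpl.
  - apply is_lim_seq_const.
  - apply is_lim_seq_plus'; [apply IH; intros|]; apply H; lia.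
Qed.

Lemma ex_series_zero : ex_series (fun _ : nat => 0).
Proof.
  assert (Hgeom : ex_series (fun j => (/ 2) ^ j)).
  { apply ex_series_geom. rewrite Rabs_pos_eq; lra. }
  apply (ex_series_ext (fun j => (/ 2) ^ j * 0)).
  - intros j; apply Rmult_0_r.
  - exact (ex_series_scal_r 0 _ Hgeom).
Qed.

Lemma ex_series_rsum n (f : nat -> nat -> R) :
  (forall mu, (mu < n)%nat -> ex_series (fun j => f j mu)) ->
  ex_series (fun j => rsum n (f j)).
Proof.
  induction n as [|n IH]; intros H; simpl.
  - exact ex_series_zero.
  - apply (ex_series_plus (fun j => rsum n (f j)) (fun j => f j n));
      [apply IH; intros|]; apply H; lia.
Qed.

Lemma ex_series_scal_l_inv (k : R) (u : nat -> R) :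
  k <> 0 -> ex_series (fun j => k * u j) -> ex_series u.
Proof.
  intros Hk Hu.
  apply (ex_series_ext (fun j => scal (/ k) (k * u j))).
  - intros j. unfold scal; simpl; unfold mult; simpl. field. exact Hk.
  - exact (ex_series_scal_l _ _ Hu).
Qed.

Lemma rmax_ge n s mu : (mu < n)%nat -> s mu <= rmax n s.
Proof.
  induction n as [|[|n] IH]; intros H; [lia| |].
  - replace mu with 0%nat by lia. simpl; lra.
  - change (rmax (S (S n)) s) with (Rmax (rmax (S n) s) (s (S n))).
    destruct (Nat.eq_dec mu (S n)) as [->|]; [apply Rmax_r|].
    eapply Rle_trans; [apply IH; lia|apply Rmax_l].
Qed.

Lemma rmax_attained n s : (1 <= n)%nat -> exists mu, (mu < n)%nat /\ rmax n s = s mu.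
Proof.
  induction n as [|[|n] IH]; intros H; [lia|exists 0%nat; split; [lia|reflexivity]|].
  change (rmax (S (S n)) s) with (Rmax (rmax (S n) s) (s (S n))).
  destruct (IH ltac:(lia)) as [m [Hm E]]. unfold Rmax. destruct Rle_dec.
  - exists (S n); split; [lia|reflexivity].
  - exists m; split; [lia|assumption].
Qed.

Lemma gamma0_neg M s :
  (1 <= M)%nat -> (forall mu, (mu < M)%nat -> 0 < s mu) -> gamma0 M s < 0.
Proof.
  intros HM Hs. unfold gamma0. destruct (rmax_attained M s HM) as [m [Hm ->]].
  assert (0 < / s m) by (apply Rinv_0_lt_compat, Hs, Hm). lra.
Qed.

Lemma gamma0_lt_denom_pos M s gamma mu :
  (1 <= M)%nat -> (forall mu, (mu < M)%nat -> 0 < s mu) ->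
  gamma0 M s < gamma -> (mu < M)%nat -> 0 < 1 + gamma * s mu.
Proof.
  intros HM Hs Hg Hmu. unfold gamma0 in Hg.
  destruct (rmax_attained M s HM) as [m [Hm Em]].
  assert (Hmax : 0 < rmax M s) by (rewrite Em; auto).
  assert (Hle := rmax_ge M s mu Hmu). assert (Hsmu := Hs mu Hmu).
  assert (Hgmax : -1 < gamma * rmax M s).
  { apply (Rmult_lt_compat_r (rmax M s)) in Hg; [|exact Hmax].
    rewrite Ropp_mult_distr_l_reverse, Rinv_l in Hg; lra. }
  destruct (Rle_lt_dec 0 gamma); nra.
Qed.

Definition theta_star (y a s gamma : R) : R := (gamma * s * y + a) / (1 + gamma * s).

Lemma objective_complete_square y a s gamma theta :
  s <> 0 -> 1 + gamma * s <> 0 ->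
  objective y a s gamma theta =
  objective y a s gamma (theta_star y a s gamma)
  - (1 + gamma * s) / (2 * s) * (theta - theta_star y a s gamma) ^ 2.
Proof. intros Hs Hu. unfold objective, lnf, theta_star. field. split; assumption. Qed.

Lemma objective_argmax_unique y a s gamma theta :
  0 < s -> 0 < 1 + gamma * s ->
  (forall t, objective y a s gamma t <= objective y a s gamma theta) ->
  theta = theta_star y a s gamma.
Proof.
  intros Hs Hu Hmax.
  specialize (Hmax (theta_star y a s gamma)).
  rewrite (objective_complete_square y a s gamma theta) in Hmax by (apply Rgt_not_eq; assumption).
  assert (Hc : 0 < (1 + gamma * s) / (2 * s)) by (apply Rdiv_lt_0_compat; lra).
  set (d := theta - theta_star y a s gamma) in *.
  assert (Hd : d * d <= 0) by nra.
  assert (d = 0) by nra.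
  unfold d in *. lra.
Qed.

Definition Tclosed (M : nat) (y a s : nat -> R) (gamma : R) : R :=
  / INR M * rsum M (fun mu => - (y mu - a mu) ^ 2 * gamma / (2 * (1 + gamma * s mu))).

(* The k-th derivative of [Tclosed] for k >= 1; for k = 0 the truncated [k - 1] makes it junk. *)
Definition Tderiv (M : nat) (y a s : nat -> R) (k : nat) (gamma : R) : R :=
  / INR M * rsum M (fun mu => INR (fact k) / 2 * (-1) ^ k
    * (((y mu - a mu) / (1 + gamma * s mu)) ^ 2 * (s mu / (1 + gamma * s mu)) ^ (k - 1))).


Lemma is_derive_sq_ratio_pow (d s : R) (j : nat) (t : R) :
  1 + t * s <> 0 ->
  is_derive (fun t => (d / (1 + t * s)) ^ 2 * (s / (1 + t * s)) ^ j) t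
    (- INR (j + 2) * (d / (1 + t * s)) ^ 2 * (s / (1 + t * s)) ^ S j).
Proof.
  intros Hu. auto_derive; [repeat split; exact Hu|].
  rewrite plus_INR. destruct j as [|j]; simpl pred; simpl (INR 2).
  - simpl. field. exact Hu.
  - rewrite S_INR, <- !tech_pow_Rmult. unfold Rdiv.
    set (X := (s * / (1 + t * s)) ^ j). field. exact Hu.
Qed.

Lemma is_derive_Tclosed M y a s gamma :
  (forall mu, (mu < M)%nat -> 1 + gamma * s mu <> 0) ->
  is_derive (Tclosed M y a s) gamma (Tderiv M y a s 1 gamma).
Proof.
  intros Hu. apply is_derive_scal, is_derive_rsum. intros mu Hmu.
  auto_derive; [specialize (Hu mu Hmu); lra|].
  simpl. field. exact (Hu mu Hmu).
Qed.

Lemma is_derive_Tderiv M y a s j gamma :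
  (forall mu, (mu < M)%nat -> 1 + gamma * s mu <> 0) ->
  is_derive (Tderiv M y a s (S j)) gamma (Tderiv M y a s (S (S j)) gamma).
Proof.
  intros Hu. apply is_derive_scal, is_derive_rsum. intros mu Hmu.
  replace (S j - 1)%nat with j by lia. replace (S (S j) - 1)%nat with (S j) by lia.
  match goal with |- is_derive _ _ (?c * (?A ^ 2 * ?B ^ S j)) =>
    replace (c * (A ^ 2 * B ^ S j))
      with (INR (fact (S j)) / 2 * (-1) ^ S j * (- INR (j + 2) * A ^ 2 * B ^ S j)) end.
  - apply is_derive_scal, is_derive_sq_ratio_pow, Hu, Hmu.
  - rewrite (fact_simpl (S j)), mult_INR. replace (j + 2)%nat with (S (S j)) by lia.
    simpl pow. unfold Rdiv. ring.
Qed.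

Lemma is_derive_Derive_n_halfline (f : R -> R) (D : nat -> R -> R) (x0 : R) :
  (forall t, x0 < t -> is_derive f t (D 0%nat t)) ->
  (forall j t, x0 < t -> is_derive (D j) t (D (S j) t)) ->
  forall j t, x0 < t -> is_derive (Derive_n f j) t (D j t).
Proof.
  intros Hf HD j. induction j as [|j IH]; intros t Ht; [exact (Hf t Ht)|].
  apply (is_derive_ext_loc (D j)); [|exact (HD j t Ht)].
  apply (filter_imp (fun u => x0 < u)); [|exact (open_gt x0 t Ht)].
  intros u Hu. symmetry. apply is_derive_unique, IH, Hu.
Qed.

Lemma exists_dominant_index n (c r : nat -> R) :
  (forall mu, (mu < n)%nat -> 0 <= c mu) -> (forall mu, (mu < n)%nat -> 0 < r mu) ->
  (exists mu0, (mu0 < n)%nat /\ c mu0 <> 0) ->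
  exists m, (m < n)%nat /\ 0 < c m /\ (forall mu, (mu < n)%nat -> c mu <> 0 -> r mu <= r m).
Proof.
  intros Hc Hr [mu0 [Hmu0 Hc0]].
  set (q := fun mu => if Req_EM_T (c mu) 0 then 0 else r mu).
  destruct (rmax_attained n q ltac:(lia)) as [m [Hm Em]].
  assert (Hq : forall mu, (mu < n)%nat -> c mu <> 0 -> r mu <= q m).
  { intros mu Hmu Hne. rewrite <- Em. pose proof (rmax_ge n q mu Hmu) as Hle.
    unfold q in Hle. destruct (Req_EM_T (c mu) 0); [contradiction|exact Hle]. }
  assert (Hqm : 0 < q m) by (pose proof (Hq mu0 Hmu0 Hc0); pose proof (Hr mu0 Hmu0); lra).
  unfold q in Hq, Hqm. destruct (Req_EM_T (c m) 0) as [|Hcm]; [lra|].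
  exists m. split; [exact Hm|split; [pose proof (Hc m Hm); lra|exact Hq]].
Qed.

Lemma rsum_pow_factor n (c r : nat -> R) x j :
  rsum n (fun mu => c mu * (x * r mu) ^ j) = x ^ j * rsum n (fun mu => c mu * r mu ^ j).
Proof. rewrite <- rsum_scal. apply rsum_ext. intros. rewrite Rpow_mult_distr. ring. Qed.

Section WeightedGeometric.

Variables (n m : nat) (c r : nat -> R).
Hypothesis Hc : forall mu, (mu < n)%nat -> 0 <= c mu.
Hypothesis Hr : forall mu, (mu < n)%nat -> 0 < r mu.
Hypothesis Hm : (m < n)%nat.
Hypothesis Hcm : 0 < c m.
Hypothesis Hdom : forall mu, (mu < n)%nat -> c mu <> 0 -> r mu <= r m.

Lemma moment_ge k : c m * r m ^ k <= rsum n (fun mu => c mu * r mu ^ k).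
Proof.
  apply (rsum_term_le n (fun mu => c mu * r mu ^ k)); [|exact Hm].
  intros mu Hmu. apply Rmult_le_pos; [apply Hc, Hmu|apply pow_le; left; apply Hr, Hmu].
Qed.

Lemma moment_ratio_lim :
  is_lim_seq (fun k => rsum n (fun mu => c mu * r mu ^ S k) / rsum n (fun mu => c mu * r mu ^ k))
    (r m).
Proof.
  set (moment k := rsum n (fun mu => c mu * r mu ^ k)).
  change (is_lim_seq (fun k => moment (S k) / moment k) (r m)).
  set (Rm := r m). assert (HRm : 0 < Rm) by apply Hr, Hm.
  (* deficit of moment (S k) against Rm * moment k, rescaled by Rm ^ k *)
  set (E := fun k => rsum n (fun mu => c mu * (Rm - r mu) * (r mu / Rm) ^ k)).
  assert (HE0 : is_lim_seq E 0).
  { replace 0 with (rsum n (fun _ => 0)) by (clear; induction n; simpl; lra).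
    apply (is_lim_seq_rsum n (fun k mu => c mu * (Rm - r mu) * (r mu / Rm) ^ k)).
    intros mu Hmu. destruct (Req_dec (c mu) 0) as [Ec|Ec].
    - apply (is_lim_seq_ext (fun _ => 0)); [intros; rewrite Ec; ring|apply is_lim_seq_const].
    - assert (Hle := Hdom mu Hmu Ec). fold Rm in Hle. assert (Hrmu := Hr mu Hmu).
      destruct (Rle_lt_or_eq_dec _ _ Hle) as [Hlt|Heq].
      + assert (Hgeom : is_lim_seq (fun k => (r mu / Rm) ^ k) 0).
        { apply is_lim_seq_geom. rewrite Rabs_pos_eq by (apply Rdiv_le_0_compat; lra).
          replace 1 with (Rm / Rm) by (field; lra).
          apply Rmult_lt_compat_r; [apply Rinv_0_lt_compat|]; lra. }
        pose proof (is_lim_seq_scal_l _ (c mu * (Rm - r mu)) 0 Hgeom) as Hlim.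
        simpl in Hlim. rewrite Rmult_0_r in Hlim. exact Hlim.
      + apply (is_lim_seq_ext (fun _ => 0)); [intros; rewrite Heq; ring|apply is_lim_seq_const]. }
  assert (HE_nonneg : forall k, 0 <= E k).
  { intro k. apply rsum_nonneg. intros mu Hmu. destruct (Req_dec (c mu) 0) as [->|Ec]; [lra|].
    assert (Hle := Hdom mu Hmu Ec). fold Rm in Hle. assert (Hrmu := Hr mu Hmu). assert (Hcmu := Hc mu Hmu).
    apply Rmult_le_pos; [apply Rmult_le_pos; lra|apply pow_le, Rdiv_le_0_compat; lra]. }
  assert (Hshift : forall k, moment (S k) = Rm * moment k - Rm ^ k * E k).
  { intro k. unfold moment, E. rewrite <- !rsum_scal, <- rsum_minus. apply rsum_ext.
    intros mu Hmu. rewrite Rmult_comm with (r1 := Rm ^ k), Rmult_assoc, <- Rpow_mult_distr.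
    replace (r mu / Rm * Rm) with (r mu) by (field; lra). simpl; ring. }
  apply (is_lim_seq_le_le (fun k => Rm - / c m * E k) _ (fun _ => Rm)).
  - intro k. pose proof (moment_ge k) as Hge. fold Rm (moment k) in Hge.
    assert (HRk : 0 < Rm ^ k) by (apply pow_lt, HRm).
    assert (Hmk : 0 < moment k) by (pose proof (Rmult_lt_0_compat _ _ Hcm HRk); lra).
    pose proof (HE_nonneg k).
    rewrite Hshift. replace ((Rm * moment k - Rm ^ k * E k) / moment k)
      with (Rm - Rm ^ k * E k / moment k) by (field; lra).
    split; [|apply Rminus_le_0; ring_simplify;
             apply Rdiv_le_0_compat; [apply Rmult_le_pos; lra|exact Hmk]].
    cut (Rm ^ k * E k / moment k <= / c m * E k); [lra|].
    apply Rmult_le_reg_r with (moment k * c m); [apply Rmult_lt_0_compat; lra|].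
    replace (Rm ^ k * E k / moment k * (moment k * c m)) with (c m * Rm ^ k * E k) by (field; lra).
    replace (/ c m * E k * (moment k * c m)) with (moment k * E k) by (field; lra).
    apply Rmult_le_compat_r; lra.
  - assert (Hlim := is_lim_seq_scal_l _ (/ c m) 0 HE0). simpl in Hlim.
    replace (Finite Rm) with (Finite (Rm - / c m * 0)) by (f_equal; ring).
    apply is_lim_seq_minus'; [apply is_lim_seq_const|exact Hlim].
  - apply is_lim_seq_const.
Qed.

Lemma ex_series_weighted_geom x :
  Rabs x * r m < 1 -> ex_series (fun j => rsum n (fun mu => c mu * (x * r mu) ^ j)).
Proof.
  intros Hx. apply (ex_series_rsum n (fun j mu => c mu * (x * r mu) ^ j)).
  intros mu Hmu. destruct (Req_dec (c mu) 0) as [Ec|Ec].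
  - apply (ex_series_ext (fun _ => 0)); [intros; rewrite Ec; simpl; ring|exact ex_series_zero].
  - assert (Hle := Hdom mu Hmu Ec). assert (Hrmu := Hr mu Hmu).
    apply (ex_series_scal_l (V := R_NormedModule) (c mu) (fun j => (x * r mu) ^ j)).
    apply ex_series_geom. rewrite Rabs_mult, (Rabs_pos_eq (r mu)) by lra.
    pose proof (Rabs_pos x). nra.
Qed.

Lemma not_ex_series_weighted_geom x :
  Rabs x * r m > 1 -> ~ ex_series (fun j => rsum n (fun mu => c mu * (x * r mu) ^ j)).
Proof.
  intros Hx Hex. apply ex_series_lim_0, is_lim_seq_abs in Hex. simpl in Hex.
  rewrite Rabs_R0 in Hex.
  assert (Hbound : forall j, c m <= Rabs (rsum n (fun mu => c mu * (x * r mu) ^ j))).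
  { intro j. rewrite rsum_pow_factor, Rabs_mult, <- RPow_abs.
    pose proof (moment_ge j) as Hge.
    rewrite (Rabs_pos_eq (rsum _ _)) by (pose proof (pow_le _ j (Rlt_le _ _ (Hr m Hm))); nra).
    assert (H1 : 1 <= (Rabs x * r m) ^ j) by (apply pow_R1_Rle; lra).
    rewrite Rpow_mult_distr in H1.
    pose proof (pow_le _ j (Rabs_pos x)).
    assert (c m <= Rabs x ^ j * (c m * r m ^ j)) by nra.
    pose proof (Rmult_le_compat_l _ _ _ H Hge). lra. }
  pose proof (is_lim_seq_le _ _ _ _ Hbound (is_lim_seq_const (c m)) Hex) as Hle.
  simpl in Hle. lra.
Qed.

End WeightedGeometric.

Section ArgmaxFamily.

Variables (M : nat) (y a s : nat -> R) (th : R -> nat -> R).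
Hypothesis HM : (1 <= M)%nat.
Hypothesis Hs : forall mu, (mu < M)%nat -> 0 < s mu.
Hypothesis Hth : is_argmax_family M y a s th.

Lemma th_eq_theta_star gamma mu :
  gamma0 M s < gamma -> (mu < M)%nat -> th gamma mu = theta_star (y mu) (a mu) (s mu) gamma.
Proof.
  intros Hg Hmu. apply objective_argmax_unique; auto.
  exact (gamma0_lt_denom_pos M s gamma mu HM Hs Hg Hmu).
Qed.

Lemma gfun_closed gamma mu :
  gamma0 M s < gamma -> (mu < M)%nat ->
  gfun y th gamma mu = (y mu - a mu) / (1 + gamma * s mu).
Proof.
  intros Hg Hmu. unfold gfun. rewrite th_eq_theta_star by assumption.
  assert (Hu := gamma0_lt_denom_pos M s gamma mu HM Hs Hg Hmu).
  unfold theta_star. field. lra.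
Qed.

Lemma Tfun_closed gamma : gamma0 M s < gamma -> Tfun M y a s th gamma = Tclosed M y a s gamma.
Proof.
  intros Hg. unfold Tfun, Tclosed. f_equal. apply rsum_ext. intros mu Hmu.
  rewrite th_eq_theta_star by assumption.
  assert (Hu := gamma0_lt_denom_pos M s gamma mu HM Hs Hg Hmu).
  assert (Hsmu := Hs mu Hmu).
  unfold objective, lnf, theta_star. field. lra.
Qed.

Lemma is_derive_Derive_n_Tfun j gamma :
  gamma0 M s < gamma ->
  is_derive (Derive_n (Tfun M y a s th) j) gamma (Tderiv M y a s (S j) gamma).
Proof.
  assert (Hne : forall g mu, gamma0 M s < g -> (mu < M)%nat -> 1 + g * s mu <> 0)
    by (intros g mu Hg Hmu; pose proof (gamma0_lt_denom_pos M s g mu HM Hs Hg Hmu); lra).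
  revert j gamma. apply is_derive_Derive_n_halfline.
  - intros g Hg. apply (is_derive_ext_loc (Tclosed M y a s)).
    + apply (filter_imp (fun u => gamma0 M s < u)); [|exact (open_gt _ g Hg)].
      intros u Hu. symmetry. apply Tfun_closed, Hu.
    + apply is_derive_Tclosed. intros mu Hmu. apply Hne; assumption.
  - intros j g Hg. apply is_derive_Tderiv. intros mu Hmu. apply Hne; assumption.
Qed.

Lemma Tderiv_1_eq gamma :
  gamma0 M s < gamma ->
  Tderiv M y a s 1 gamma = / INR M * rsum M (fun mu => lnf (y mu) (th gamma mu)).
Proof.
  intros Hg. unfold Tderiv. f_equal. apply rsum_ext. intros mu Hmu.
  rewrite th_eq_theta_star by assumption.
  assert (Hu := gamma0_lt_denom_pos M s gamma mu HM Hs Hg Hmu).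
  unfold lnf, theta_star. simpl. field. lra.
Qed.

Lemma Tderiv_eq_gfun k gamma :
  gamma0 M s < gamma ->
  Tderiv M y a s k gamma = INR (fact k) / (2 * INR M) * (-1) ^ k *
    rsum M (fun mu => gfun y th gamma mu ^ 2 * (s mu / (1 + gamma * s mu)) ^ (k - 1)).
Proof.
  intros Hg. assert (HMpos : 0 < INR M) by (apply lt_0_INR; lia).
  unfold Tderiv. rewrite <- !rsum_scal. apply rsum_ext. intros mu Hmu.
  rewrite gfun_closed by assumption.
  assert (Hu := gamma0_lt_denom_pos M s gamma mu HM Hs Hg Hmu).
  field. split; lra.
Qed.

Lemma taylor_coeff_Tfun eta j :
  / INR (fact (S j)) * Derive_n (Tfun M y a s th) (S j) 1 * eta ^ S j =
  - eta / (2 * INR M) *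
    rsum M (fun mu => gfun y th 1 mu ^ 2 * (- eta * (s mu / (1 + s mu))) ^ j).
Proof.
  assert (H1 : gamma0 M s < 1) by (pose proof (gamma0_neg M s HM Hs); lra).
  assert (HMpos : 0 < INR M) by (apply lt_0_INR; lia).
  pose proof (INR_fact_neq_0 (S j)).
  change (Derive_n (Tfun M y a s th) (S j) 1) with (Derive (Derive_n (Tfun M y a s th) j) 1).
  rewrite (is_derive_unique _ _ _ (is_derive_Derive_n_Tfun j 1 H1)), Tderiv_eq_gfun by exact H1.
  replace (S j - 1)%nat with j by lia.
  rewrite (rsum_ext M (fun mu => gfun y th 1 mu ^ 2 * (s mu / (1 + 1 * s mu)) ^ j)
             (fun mu => gfun y th 1 mu ^ 2 * (s mu / (1 + s mu)) ^ j))
    by (intros; rewrite Rmult_1_l; reflexivity).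
  rewrite (rsum_ext M (fun mu => gfun y th 1 mu ^ 2 * (- eta * (s mu / (1 + s mu))) ^ j)
             (fun mu => (-1 * eta) ^ j * (gfun y th 1 mu ^ 2 * (s mu / (1 + s mu)) ^ j)))
    by (intros; replace (- eta) with (-1 * eta) by ring; rewrite Rpow_mult_distr; ring).
  rewrite rsum_scal, Rpow_mult_distr.
  set (S := rsum M _). simpl pow. field. split; lra.
Qed.

Lemma ex_series_taylor_Tfun_iff eta :
  ex_series (fun k => / INR (fact k) * Derive_n (Tfun M y a s th) k 1 * eta ^ k) <->
  ex_series (fun j => - eta / (2 * INR M) *
    rsum M (fun mu => gfun y th 1 mu ^ 2 * (- eta * (s mu / (1 + s mu))) ^ j)).
Proof.
  rewrite ex_series_incr_1.
  split; apply ex_series_ext; intros j; rewrite taylor_coeff_Tfun; reflexivity.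
Qed.

Lemma taylor_Tfun_radius m :
  (m < M)%nat -> 0 < gfun y th 1 m ^ 2 ->
  (forall mu, (mu < M)%nat -> gfun y th 1 mu ^ 2 <> 0 ->
     s mu / (1 + s mu) <= s m / (1 + s m)) ->
  (forall eta, Rabs eta * (s m / (1 + s m)) < 1 ->
     ex_series (fun k => / INR (fact k) * Derive_n (Tfun M y a s th) k 1 * eta ^ k)) /\
  (forall eta, Rabs eta * (s m / (1 + s m)) > 1 ->
     ~ ex_series (fun k => / INR (fact k) * Derive_n (Tfun M y a s th) k 1 * eta ^ k)).
Proof.
  intros Hm Hcm Hdom.
  set (r := fun mu => s mu / (1 + s mu)).
  assert (Hr : forall mu, (mu < M)%nat -> 0 < r mu)
    by (intros mu Hmu; pose proof (Hs mu Hmu); apply Rdiv_lt_0_compat; lra).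
  assert (Hc : forall mu, (mu < M)%nat -> 0 <= gfun y th 1 mu ^ 2) by (intros; apply pow2_ge_0).
  split; intros eta Heta; rewrite ex_series_taylor_Tfun_iff; rewrite <- Rabs_Ropp in Heta.
  - apply (ex_series_scal_l (V := R_NormedModule)).
    exact (ex_series_weighted_geom M m _ r Hr Hdom _ Heta).
  - assert (Hneq : - eta / (2 * INR M) <> 0).
    { assert (eta <> 0) by (intros ->; rewrite Ropp_0, Rabs_R0 in Heta; lra).
      assert (0 < INR M) by (apply lt_0_INR; lia).
      unfold Rdiv. apply Rmult_integral_contrapositive_currified;
        [lra|apply Rinv_neq_0_compat; lra]. }
    intros Hex. apply ex_series_scal_l_inv in Hex; [|exact Hneq].
    exact (not_ex_series_weighted_geom M m _ r Hc Hr Hm Hcm _ Heta Hex).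
Qed.

End ArgmaxFamily.

Theorem theorem4 (M : nat) (y a s : nat -> R) (th : R -> nat -> R)
  (HM : (1 <= M)%nat)
  (Hs : forall mu, (mu < M)%nat -> 0 < s mu)
  (Hth : is_argmax_family M y a s th) :
  (forall gamma, gamma0 M s < gamma ->
     is_derive (Tfun M y a s th) gamma
       (/ INR M * rsum M (fun mu => lnf (y mu) (th gamma mu)))) /\
  (forall (k : nat) gamma, (2 <= k)%nat -> gamma0 M s < gamma ->
     is_derive_n (Tfun M y a s th) k gamma
       (INR (fact k) / (2 * INR M) * (-1) ^ k *
        rsum M (fun mu => gfun y th gamma mu ^ 2
                          * (s mu / (1 + gamma * s mu)) ^ (k - 1)))) /\
  ((exists mu, (mu < M)%nat /\ y mu <> a mu) ->
   let gm := fun mu => gfun y th 1 mu in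
   let r := fun mu => s mu / (1 + s mu) in
   let taylor := fun eta : R => fun k : nat =>
       / INR (fact k) * Derive_n (Tfun M y a s th) k 1 * eta ^ k in
   (exists L : R,
      is_lim_seq (fun n : nat =>
          rsum M (fun mu => gm mu ^ 2 * r mu ^ (S n))
        / rsum M (fun mu => gm mu ^ 2 * r mu ^ n)) (Finite L) /\
      (forall eta, Rabs eta * L < 1 -> ex_series (taylor eta)) /\
      (forall eta, Rabs eta * L > 1 -> ~ ex_series (taylor eta))) /\
   (forall s0 : R, (forall mu, (mu < M)%nat -> s mu = s0) ->
      (forall eta, Rabs eta * (s0 / (1 + s0)) < 1 -> ex_series (taylor eta)) /\
      (forall eta, Rabs eta * (s0 / (1 + s0)) > 1 -> ~ ex_series (taylor eta)))).
Proof.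
  split; [|split].
  - intros gamma Hg. rewrite <- (Tderiv_1_eq M y a s th HM Hs Hth) by assumption.
    exact (is_derive_Derive_n_Tfun M y a s th HM Hs Hth 0 gamma Hg).
  - intros [|j] gamma Hk Hg; [lia|].
    rewrite <- (Tderiv_eq_gfun M y a s th HM Hs Hth) by assumption.
    exact (is_derive_Derive_n_Tfun M y a s th HM Hs Hth j gamma Hg).
  - intros [mu0 [Hmu0 Hya]] gm r taylor.
    assert (H1 : gamma0 M s < 1) by (pose proof (gamma0_neg M s HM Hs); lra).
    assert (Hr : forall mu, (mu < M)%nat -> 0 < r mu)
      by (intros mu Hmu; pose proof (Hs mu Hmu); apply Rdiv_lt_0_compat; lra).
    assert (Hc : forall mu, (mu < M)%nat -> 0 <= gm mu ^ 2) by (intros; apply pow2_ge_0).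
    assert (Hc0 : gm mu0 ^ 2 <> 0).
    { unfold gm. rewrite (gfun_closed M y a s th HM Hs Hth) by assumption.
      pose proof (Hs mu0 Hmu0).
      apply pow_nonzero, Rmult_integral_contrapositive_currified;
        [lra|apply Rinv_neq_0_compat; lra]. }
    destruct (exists_dominant_index M _ r Hc Hr (ex_intro _ mu0 (conj Hmu0 Hc0)))
      as [m [Hm [Hcm Hdom]]].
    destruct (taylor_Tfun_radius M y a s th HM Hs Hth m Hm Hcm Hdom) as [Hconv Hdiv].
    split.
    + exists (r m). split; [exact (moment_ratio_lim M m _ r Hc Hr Hm Hcm Hdom)|split; assumption].
    + intros s0 Hs0. unfold r in Hconv, Hdiv. rewrite Hs0 in Hconv, Hdiv by exact Hm.
      split; assumption.
Qed.
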